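(* Let $K$ be a field, $\vartheta$ any one of the four types (left, right, pre-two-sided, two-sided), and $\mathcal A$ a $K$-algebra. Then $\mathcal A$ is $\vartheta$-stable if and only if one of the following holds: (1) $\mathcal A=K$ (i.e., $\mathcal A=K\cdot 1$); (2) $K\simeq\mathbb Z/2\mathbb Z$ and $\mathcal A\simeq\mathbb Z/2\mathbb Z\times\mathbb Z/2\mathbb Z$ (product algebra).
   Context: Algebras are associative, unital and nonzero. A $\vartheta$-ideal is a left ideal if $\vartheta$ = left, a right ideal if $\vartheta$ = right, and a two-sided ideal if $\vartheta$ is pre-two-sided or two-sided. $\mathcal A$ is $\vartheta$-stable if every $K$-subspace $V$ of $\mathcal A$ with $1\notin V$ is a $\vartheta$-ideal of $\mathcal A$. *)

From mathcomp Require Import all_boot all_algebra.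
Set Implicit Arguments. Unset Strict Implicit. Unset Printing Implicit Defensive.
Import GRing.Theory.
Local Open Scope ring_scope.

Inductive ideal_type := Left | Right | PreTwoSided | TwoSided.

Section Defs.
Variables (K : fieldType) (A : algType K).

Definition is_subspace (V : A -> Prop) : Prop :=
  [/\ V 0, (forall x y, V x -> V y -> V (x + y)) &
      (forall (k : K) x, V x -> V (k *: x))].

Definition is_left_ideal (V : A -> Prop) : Prop :=
  [/\ V 0, (forall x y, V x -> V y -> V (x - y)) &
      (forall a x, V x -> V (a * x))].

Definition is_right_ideal (V : A -> Prop) : Prop :=
  [/\ V 0, (forall x y, V x -> V y -> V (x - y)) &
      (forall a x, V x -> V (x * a))].

Definition is_twosided_ideal (V : A -> Prop) : Prop :=
  is_left_ideal V /\ is_right_ideal V.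

Definition is_theta_ideal (t : ideal_type) (V : A -> Prop) : Prop :=
  match t with
  | Left => is_left_ideal V
  | Right => is_right_ideal V
  | PreTwoSided | TwoSided => is_twosided_ideal V
  end.

Definition theta_stable (t : ideal_type) : Prop :=
  forall V : A -> Prop, is_subspace V -> ~ V 1 -> is_theta_ideal t V.

End Defs.

From mathcomp Require Import all_boot all_algebra.
From mathcomp Require Import ring.
From Stdlib Require Import Classical.
Import GRing.Theory.
Local Open Scope ring_scope.

(* If some x is not a scalar, the line K x avoids 1, so stability makes it a
   one-sided ideal: a x (or x a) is a multiple of x for every a.  Comparing
   a x with a (x + 1) gives A = K 1 + K x, and comparing the squares of x and
   x + 1 gives x^2 = -x.  Hence e = -x is a nontrivial idempotent, and the
   Peirce decomposition (p, q) |-> p e + q (1 - e) is an algebra isomorphism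
   K x K -> A.  For c <> 1 the element (1, c) is not a scalar, so its square
   (1, c^2) lies on its line, which forces c = 0: K = F_2.
   Conversely, over F_2 every point of K x K other than (1, 1) has a zero
   coordinate, so all its left and right multiples lie on its line and every
   subspace avoiding 1 is a two-sided ideal; when A = K such a subspace is 0. *)

Section Scalars.
Context {K : fieldType} {A : algType K}.

Definition is_scalar (a : A) : Prop := exists k : K, a = k%:A.

Lemma oner_neq0_nonscalar {x : A} : ~ is_scalar x -> (1 : A) != 0.
Proof.
move=> xNK; apply/eqP=> A10; apply: xNK; exists 0.
by rewrite scale0r -[x]mulr1 A10 mulr0.
Qed.

Lemma nonscalarD {x : A} (k : K) : ~ is_scalar x -> ~ is_scalar (x + k%:A).
Proof. by move=> xNK [c E]; apply: xNK; exists (c - k); rewrite scalerBl -E addrK. Qed.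

Lemma nonscalar_indep {x : A} :
  ~ is_scalar x -> forall al be : K, al%:A + be *: x = 0 -> al = 0 /\ be = 0.
Proof.
move=> xNK al be E.
have be0 : be = 0.
  apply: contra_not_eq xNK => nz_be; exists (- (be^-1 * al)).
  move/eqP: E; rewrite addrC addr_eq0 => /eqP E.
  by rewrite -[x](scalerK nz_be) E scalerN scalerA scaleNr.
split=> //; move/eqP: E; rewrite be0 scale0r addr0 scaler_eq0.
by rewrite (negPf (oner_neq0_nonscalar xNK)) orbF => /eqP.
Qed.

Lemma nonscalar_coef_inj {x : A} : ~ is_scalar x ->
  forall al be ga de : K, al%:A + be *: x = ga%:A + de *: x -> al = ga /\ be = de.
Proof.
move=> xNK al be ga de E.
have /(nonscalar_indep xNK) [] : (al - ga)%:A + (be - de) *: x = 0.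
  by rewrite !scalerBl addrACA -opprD E subrr.
by move=> /subr0_eq -> /subr0_eq ->.
Qed.

Definition line (y : A) : A -> Prop := fun z => exists k : K, z = k *: y.

Definition line_closed (mul : A -> A -> A) : Prop :=
  forall y, ~ is_scalar y -> forall a, line y (mul a y).

Definition sqr_in_lines : Prop := forall y, ~ is_scalar y -> line y (y * y).

Lemma nonscalar_idempotent :
  sqr_in_lines -> forall x : A, ~ is_scalar x -> exists e : A, e * e = e /\ ~ is_scalar e.
Proof.
move=> sqr_line x xNK; have [l El] := sqr_line x xNK.
have [m] := sqr_line _ (nonscalarD 1 xNK); rewrite scale1r => Em.
have /(nonscalar_coef_inj xNK) [m1 lm] : 1%:A + (l + 2) *: x = m%:A + m *: x.
  rewrite -scalerDr [1 + x]addrC -Em mulrDr mulr1 mulrDl El mul1r.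
  by rewrite scale1r scalerDl scaler_nat mulr2n addrC !addrA.
have l_eq : l = -1 by apply: (addIr 2); rewrite lm -m1; ring.
exists (- x); split; first by rewrite mulrNN El l_eq scaleN1r.
by case=> k E; apply: xNK; exists (- k); rewrite scaleNr -E opprK.
Qed.

Lemma line_theta_ideal {t : ideal_type} :
  theta_stable A t -> forall y, ~ is_scalar y -> is_theta_ideal t (line y).
Proof.
move=> stA y yNK; apply: stA.
- split; first by exists 0; rewrite scale0r.
    by move=> _ _ [k ->] [l ->]; exists (k + l); rewrite scalerDl.
  by move=> k _ [l ->]; exists (k * l); rewrite scalerA.
- case=> k E; have [k0|nz_k] := eqVneq k 0.
    by move: (oner_neq0_nonscalar yNK); rewrite E k0 scale0r eqxx.
  by apply: yNK; exists k^-1; rewrite -[y](scalerK nz_k) -E.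
Qed.

Lemma theta_stable_line_closed {t : ideal_type} :
  theta_stable A t -> line_closed *%R \/ line_closed (fun a y => y * a).
Proof.
move=> stA; have line_id := line_theta_ideal stA.
have y_line y : line y y by exists 1; rewrite scale1r.
case: t stA line_id => _ line_id; [left | right | left | left] => y yNK a.
- by case: (line_id y yNK) => _ _ mulV; apply/mulV/y_line.
- by case: (line_id y yNK) => _ _ mulV; apply/mulV/y_line.
- by case: (line_id y yNK) => [[_ _ mulV] _]; apply/mulV/y_line.
- by case: (line_id y yNK) => [[_ _ mulV] _]; apply/mulV/y_line.
Qed.

Section LineClosed.
Variable mul : A -> A -> A.
Hypotheses (mul_diag : forall y, mul y y = y * y)
  (mul_addr1 : forall a y, mul a (y + 1) = mul a y + a)
  (closed : line_closed mul).

Lemma line_closed_sqr : sqr_in_lines.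
Proof. by move=> y /closed /(_ y); rewrite mul_diag. Qed.

Lemma line_closed_span y :
  ~ is_scalar y -> forall a, exists l m : K, a = l *: y + m%:A.
Proof.
move=> yNK a; have [l El] := closed _ yNK a.
have y1NK : ~ is_scalar (y + 1) by rewrite -[1]scale1r; apply: nonscalarD.
have [m Em] := closed _ y1NK a.
have E : m *: (y + 1) = l *: y + a by rewrite -Em mul_addr1 El.
exists (m - l), m; apply: (addIr (l *: y)).
by rewrite [LHS]addrC -E scalerBl scalerDr addrAC subrK.
Qed.

End LineClosed.

Definition prod_alg_iso (f : A -> K * K) : Prop :=
  [/\ bijective f, f 1 = 1, {morph f : x y / x + y}, {morph f : x y / x * y} &
      forall (k : K) x, f (k *: x) = (k * (f x).1, k * (f x).2)].

Section Peirce.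
Variable e : A.
Hypothesis e_idem : e * e = e.

Definition peirce (p : K * K) : A := p.1 *: e + p.2 *: (1 - e).

Lemma peirceE p : peirce p = p.2%:A + (p.1 - p.2) *: e.
Proof. by rewrite /peirce scalerBr scalerBl addrCA. Qed.

Lemma peirce_scalar k : peirce (k, k) = k%:A.
Proof. by rewrite peirceE subrr scale0r addr0. Qed.

Lemma peirceD p q : peirce (p + q) = peirce p + peirce q.
Proof. by rewrite /peirce !scalerDl addrACA. Qed.

Lemma peirceZ k p : peirce (k * p.1, k * p.2) = k *: peirce p.
Proof. by rewrite /peirce [RHS]scalerDr !scalerA. Qed.

Lemma peirceM p q : peirce (p * q) = peirce p * peirce q.
Proof.
rewrite /peirce; set f := 1 - e.
have e_f : e * f = 0 by rewrite mulrBr mulr1 e_idem subrr.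
have f_e : f * e = 0 by rewrite mulrBl mul1r e_idem subrr.
have f_idem : f * f = f by rewrite mulrBl mul1r e_f subr0.
rewrite mulrDl !mulrDr -!scalerAl -!scalerAr !scalerA.
by rewrite e_idem e_f f_e f_idem !scaler0 addr0 add0r.
Qed.

Hypothesis e_nonscalar : ~ is_scalar e.

Lemma peirce_inj : injective peirce.
Proof.
move=> [a b] [c d]; rewrite !peirceE /= => /(nonscalar_coef_inj e_nonscalar).
by case=> <- /addIr ->.
Qed.

Lemma peirce_nonscalar p : p.1 != p.2 -> ~ is_scalar (peirce p).
Proof.
case: p => a b /= ab [k]; rewrite -peirce_scalar => /peirce_inj [ak bk].
by rewrite ak bk eqxx in ab.
Qed.

Lemma peirce_binary : sqr_in_lines -> forall c : K, c = 0 \/ c = 1.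
Proof.
move=> sqr_line c; case: (eqVneq c 1) => [->|c1]; [by right | left].
have yNK : ~ is_scalar (peirce (1, c)) by apply: peirce_nonscalar; rewrite eq_sym.
have [k] := sqr_line _ yNK.
rewrite -peirceM -peirceZ => /peirce_inj [k1 cc].
apply/eqP; apply: contraNT c1 => c0; apply/eqP; apply: (mulIf c0).
by rewrite cc; congr (_ * _); rewrite !mulr1 in k1.
Qed.

Lemma peirce_surj :
  (forall a : A, exists l m : K, a = l *: e + m%:A) -> forall a, exists p, a = peirce p.
Proof.
move=> span a; have [l [m ->]] := span a.
by exists (l + m, m); rewrite peirceE /= addrK addrC.
Qed.

Lemma peirce_prod_alg_iso :
  (forall a, exists p, a = peirce p) -> exists f, prod_alg_iso f.
Proof.
move=> surj; have surj' a : exists p, a == peirce p by have [p ->] := surj a; exists p.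
pose f a := xchoose (surj' a).
have fK : cancel f peirce by move=> a; exact/esym/eqP/(xchooseP (surj' a)).
have Kf : cancel peirce f by move=> p; apply: peirce_inj; rewrite fK.
exists f; split.
- by exists peirce.
- by rewrite -[1](scale1r 1) -peirce_scalar Kf.
- by move=> a b; apply: peirce_inj; rewrite peirceD !fK.
- by move=> a b; apply: peirce_inj; rewrite peirceM !fK.
- by move=> k a; apply: peirce_inj; rewrite peirceZ !fK.
Qed.

End Peirce.

Lemma theta_stable_nonscalar {t : ideal_type} {x : A} :
  theta_stable A t -> ~ is_scalar x ->
  (forall c : K, c = 0 \/ c = 1) /\ exists f, prod_alg_iso f.
Proof.
move=> stA xNK.
have [sqr_line span] : sqr_in_lines /\
    forall y : A, ~ is_scalar y -> forall a, exists l m : K, a = l *: y + m%:A.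
  case: (theta_stable_line_closed stA) => closed; split.
  - exact: line_closed_sqr closed.
  - by apply: line_closed_span closed => a y; rewrite mulrDr mulr1.
  - exact: line_closed_sqr closed.
  - by apply: line_closed_span closed => a y; rewrite mulrDl mul1r.
have [e [e_idem eNK]] := nonscalar_idempotent sqr_line _ xNK.
split; first exact: peirce_binary _ e_idem eNK sqr_line.
by apply: (peirce_prod_alg_iso _ e_idem eNK); apply: peirce_surj; apply: span.
Qed.

Lemma theta_ideal_of_mul_closed (t : ideal_type) (V : A -> Prop) :
  is_subspace V -> (forall a v, V v -> V (a * v) /\ V (v * a)) -> is_theta_ideal t V.
Proof.
case=> V0 VD VZ Vmul.
have VB u w : V u -> V w -> V (u - w).
  by move=> Vu Vw; apply: VD => //; rewrite -scaleN1r; apply: VZ.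
have lid : is_left_ideal V by split=> // a v /(Vmul a) [].
have rid : is_right_ideal V by split=> // a v /(Vmul a) [].
by case: t.
Qed.

Lemma scalar_theta_stable (t : ideal_type) :
  (forall a : A, is_scalar a) -> theta_stable A t.
Proof.
move=> scalarA V subV V1; have [V0 _ VZ] := subV.
have V_0 v : V v -> v = 0.
  move=> Vv; have [k Ek] := scalarA v; have [k0|nz_k] := eqVneq k 0.
    by rewrite Ek k0 scale0r.
  by case: V1; rewrite -[1](scalerK nz_k) -Ek; apply: VZ.
by apply: theta_ideal_of_mul_closed => // a v /V_0 ->; rewrite mulr0 mul0r.
Qed.

Lemma prod_theta_stable (t : ideal_type) (f : A -> K * K) :
  (forall c : K, c = 0 \/ c = 1) -> prod_alg_iso f -> theta_stable A t.
Proof.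
move=> binK [/bij_inj f_inj f1 _ fM fZ] V subV V1; have [_ _ VZ] := subV.
apply: theta_ideal_of_mul_closed => // a v Vv.
have fv_zero : (f v).1 = 0 \/ (f v).2 = 0.
  case: (binK (f v).1) => [|v1]; first by left.
  case: (binK (f v).2) => [|v2]; first by right.
  by case: V1; rewrite -(f_inj v 1) // f1 [f v]surjective_pairing v1 v2.
have [k Ek] : exists k, f a * f v = f (k *: v) /\ f v * f a = f (k *: v).
  case: fv_zero => fv0; [exists (f a).2 | exists (f a).1];
    rewrite fZ; case: (f a) (f v) fv0 => [a1 a2] [v1 v2] /= ->;
    by split; congr pair; rewrite ?mulr0 ?mul0r // mulrC.
rewrite -!fM in Ek; rewrite (f_inj _ _ Ek.1) (f_inj _ _ Ek.2).
by split; apply: VZ.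
Qed.

End Scalars.

Lemma F2_elem (i : 'F_2) : i = 0 \/ i = 1.
Proof. by case: i => [[|[|//]] ?]; [left | right]; apply: val_inj. Qed.

Lemma F2_isoP (K : fieldType) :
  (exists g : K -> 'F_2, [/\ bijective g, g 1 = 1,
      {morph g : x y / x + y} & {morph g : x y / x * y}]) <->
  (forall c : K, c = 0 \/ c = 1).
Proof.
split=> [[g [/bij_inj g_inj g1 gD _]] c | binK].
  have g0 : g 0 = 0 by apply: (addrI (g 0)); rewrite -gD !addr0.
  by case: (F2_elem (g c)) => gc; [left | right]; apply: g_inj; rewrite gc ?g0 ?g1.
have char2 : 1 + 1 = 0 :> K.
  by case: (binK (1 + 1)) => // /eqP; rewrite -subr_eq0 addrK oner_eq0.
have F2_char2 : 1 + 1 = 0 :> 'F_2 by apply: val_inj.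
pose g (c : K) : 'F_2 := if c == 0 then 0 else 1.
exists g; split.
- exists (fun i : 'F_2 => if i == 0 then 0 else 1 : K).
    by move=> c; case: (binK c) => ->; rewrite /g ?eqxx ?oner_eq0.
  by move=> i; case: (F2_elem i) => ->; rewrite /g ?eqxx ?oner_eq0.
- by rewrite /g oner_eq0.
- move=> a b; case: (binK a) => ->; case: (binK b) => ->;
    by rewrite ?add0r ?addr0 ?char2 /g ?eqxx ?oner_eq0 ?add0r ?addr0 ?F2_char2.
- move=> a b; case: (binK a) => ->; case: (binK b) => ->;
    by rewrite ?mul0r ?mulr0 ?mul1r /g ?eqxx ?oner_eq0 ?mul0r ?mulr0 ?mul1r.
Qed.

Theorem proposition7p13 (K : fieldType) (t : ideal_type) (A : algType K) :
  theta_stable A t <->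
  ((forall a : A, exists k : K, a = k%:A)
   \/
   ((exists g : K -> 'F_2,
       [/\ bijective g, g 1 = 1,
           (forall x y, g (x + y) = g x + g y) &
           (forall x y, g (x * y) = g x * g y)]) /\
    (exists f : A -> K * K,
       [/\ bijective f, f 1 = 1,
           (forall x y, f (x + y) = f x + f y),
           (forall x y, f (x * y) = f x * f y) &
           (forall (k : K) x, f (k *: x) = (k * (f x).1, k * (f x).2))]))).
Proof.
split=> [stA | [scalarA | [/F2_isoP binK [f iso_f]]]].
- case: (classic (forall a : A, is_scalar a)) => [scalarA | /not_all_ex_not [x xNK]].
    by left.
  have [binK iso] := theta_stable_nonscalar stA xNK.
  by right; split; [apply/F2_isoP | exact: iso].
- exact: scalar_theta_stable.
- exact: prod_theta_stable binK iso_f.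
Qed.
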